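(* Let the reals $e^1_{j,n},e^2_{j,n},v_{j,n}$ ($0\le j\le J$, $1\le n\le N$) and $d^1_{j,n},d^2_{j,n}$ ($0\le j\le J$, $1\le n\le N-1$) be feasible for $\mathbf L_H^{\mathcal X,\mathcal T}$ (described in the context). Then the associated Markovian semi-static trading strategy super-replicates the American claim along every path with $x_{t_n}\in\mathcal X$ for $1\le n\le N$: for every $(x_{t_1},\dots,x_{t_N})\in\mathcal X^N$ and every exercise time $\rho\in\mathcal T$, $\mathcal G_T(x_{t_1},\dots,x_{t_N},\rho)\ge a(x_\rho,\rho)$.
   Context: Fix integers $N\ge1$, $J\ge1$, times $0=t_0<t_1<\dots<t_N=T$, $\mathcal T=\{t_1,\dots,t_N\}$, strikes $0<x_1<\dots<x_J$, $x_0=0$, $\mathcal X=\{x_0,\dots,x_J\}$, numbers $p_{j,n}$ ($0\le j\le J$, $1\le n\le N$) (the risk-neutral probabilities $\mathbb P(X_{t_n}=x_j)$ implied by call prices), and a payoff $a:\mathcal X\times\mathcal T\to[0,\infty)$. $\mathbf L_H^{\mathcal X,\mathcal T}$ is the linear program: over reals $e^1_{j,n},e^2_{j,n},v_{j,n}$ ($1\le n\le N$) and $d^1_{j,n},d^2_{j,n}$ ($1\le n\le N-1$), with $e^1_{j,N}=e^2_{j,1}=0$, minimise $\sum_{j,n}(e^1_{j,n}+e^2_{j,n})p_{j,n}+\sum_jv_{j,N}p_{j,N}$ subject to $v_{j,n}\ge0$ and (i) $v_{j,n}\ge a(x_j,t_n)$; (ii) $e^1_{j,n}+e^2_{k,n+1}+(x_k-x_j)d^1_{j,n}\ge0$;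 (iii) $e^1_{j,n}+e^2_{k,n+1}+(x_k-x_j)d^2_{j,n}-v_{j,n}+v_{k,n+1}\ge0$ for all $0\le j,k\le J$, $1\le n\le N-1$. The associated Markovian semi-static strategy holds the European claim paying $b_{j,n}$ at $t_n$ if $X_{t_n}=x_j$, where $b_{j,n}=e^1_{j,n}+e^2_{j,n}$ for $n<N$ and $b_{j,N}=e^1_{j,N}+e^2_{j,N}+v_{j,N}$, and over $[t_n,t_{n+1}]$ ($1\le n\le N-1$) holds $d^1_{j,n}$ units of stock if $x_{t_n}=x_j$ and exercise has not occurred by $t_n$ (i.e. $n<\mathcal N(\rho)$), and $d^2_{j,n}$ units if $x_{t_n}=x_j$ and $n\ge\mathcal N(\rho)$, where $\mathcal N(\rho)=\min\{n:t_n\ge\rho\}$ for exercise time $\rho$. Its terminal payoff along $(x_{t_1},\dots,x_{t_N})$ with exercise at $\rho$ is $\mathcal G_T=\sum_{n,j}b_{j,n}1_{\{x_{t_n}=x_j\}}+\sum_{n=1}^{\mathcal N(\rho)-1}d^1_{n}(x_{t_n})(x_{t_{n+1}}-x_{t_n})+\sum_{n=\mathcal N(\rho)}^{N-1}d^2_{n}(x_{t_n})(x_{t_{n+1}}-x_{t_n})$, with $d^\delta_n(x_j):=d^\delta_{j,n}$. *)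

From HB Require Import structures.
From mathcomp Require Import all_boot all_order all_algebra.
From mathcomp Require Import reals.
Set Implicit Arguments. Unset Strict Implicit. Unset Printing Implicit Defensive.
Import Order.TTheory GRing.Theory Num.Theory.
Local Open Scope ring_scope.

Section Defs.
Variable R : realType.

(* Time indices run over 1..N, strike indices over 0..J.
   Variables of the LP are functions of (j, n). *)

Definition feasible (N J : nat) (x : nat -> R) (t : nat -> R) (a : R -> R -> R)
  (e1 e2 v d1 d2 : nat -> nat -> R) : Prop :=
  (forall j, (j <= J)%N -> e1 j N = 0) /\
  (forall j, (j <= J)%N -> e2 j 1%N = 0) /\
  (forall j n, (j <= J)%N -> (1 <= n <= N)%N -> 0 <= v j n) /\
  (forall j n, (j <= J)%N -> (1 <= n <= N)%N -> a (x j) (t n) <= v j n) /\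
  (forall j k n, (j <= J)%N -> (k <= J)%N -> (1 <= n <= N.-1)%N ->
      0 <= e1 j n + e2 k n.+1 + (x k - x j) * d1 j n) /\
  (forall j k n, (j <= J)%N -> (k <= J)%N -> (1 <= n <= N.-1)%N ->
      0 <= e1 j n + e2 k n.+1 + (x k - x j) * d2 j n - v j n + v k n.+1).

(* European claim payoffs b_{j,n}. *)
Definition bcoef (N : nat) (e1 e2 v : nat -> nat -> R) (j n : nat) : R :=
  if (n < N)%N then e1 j n + e2 j n else e1 j n + e2 j n + v j n.

Definition Nrho (N : nat) (t : nat -> R) (rho : R) : nat :=
  (find (fun n => rho <= t n) (iota 1 N)).+1.

(* Terminal value G_T of the Markovian semi-static strategy along the path
   x_{t_n} = x (w n), with exercise time rho. *)
Definition GT (N J : nat) (x : nat -> R) (t : nat -> R)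
  (e1 e2 v d1 d2 : nat -> nat -> R) (w : nat -> nat) (rho : R) : R :=
  \sum_(1 <= n < N.+1) \sum_(j < J.+1) bcoef N e1 e2 v j n * (x (w n) == x j)%:R
  + \sum_(1 <= n < Nrho N t rho) d1 (w n) n * (x (w n.+1) - x (w n))
  + \sum_(Nrho N t rho <= n < N) d2 (w n) n * (x (w n.+1) - x (w n)).

End Defs.

From HB Require Import structures.
From mathcomp Require Import all_boot all_order all_algebra.
From mathcomp Require Import reals.
From mathcomp Require Import zify lra.
Import Order.TTheory GRing.Theory Num.Theory Order.NatMonotonyTheory.
Local Open Scope ring_scope.

(* Along a path the strategy collects, between consecutive dates t_n and t_{n+1},
   the cash e1_n + e2_{n+1} plus the stock gain d_n (x_{n+1} - x_n).  Constraint (ii)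
   makes this nonnegative before exercise, and constraint (iii) makes it dominate the
   decrease v_n - v_{n+1} after exercise.  Summing, the terminal wealth is at least
   the telescoped value v at the exercise date, which dominates the payoff by (i). *)

Lemma incn_prefix_mono {d : Order.disp_t} {T : porderType d} {K : nat} {f : nat -> T} :
  (forall n, (n < K)%N -> (f n < f n.+1)%O) ->
  {in [pred i | (i <= K)%N] &, {mono f : i j / (i <= j)%N >-> (i <= j)%O}}.
Proof.
move=> f_inc; apply: incn_inP => [i j _ jK k /andP[_ kj] | i iK iK1].
- by rewrite inE (leq_trans (ltnW kj)).
- exact: f_inc.
Qed.

Section Superhedging.
Variable R : realType.

Lemma eq_bigD1_indicator {T : eqType} {J k : nat} {x : nat -> T} (F : nat -> R) :
  {in [pred i | (i <= J)%N] &, injective x} -> (k <= J)%N ->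
  \sum_(j < J.+1) F j * (x k == x j)%:R = F k.
Proof.
move=> xinj kJ; rewrite (bigD1 (Ordinal (kJ : (k < J.+1)%N))) //= eqxx mulr1.
rewrite big1 ?addr0 // => j neq_jk; case: eqP => [/xinj xkj|]; last by rewrite mulr0.
by case/eqP: neq_jk; apply: val_inj; rewrite /= xkj // inE -ltnS.
Qed.

Lemma Nrho_grid (N m : nat) (t : nat -> R) :
  {in [pred i | (i <= N)%N] &, {mono t : i j / (i <= j)%N >-> i <= j}} ->
  (1 <= m <= N)%N -> Nrho N t (t m) = m.
Proof.
move=> tmono /andP[m1 mN]; rewrite /Nrho.
have -> : iota 1 N = iota 1 m.-1 ++ iota (1 + m.-1) (N - m).+1.
  by rewrite -iotaD; congr iota; lia.
rewrite add1n prednK // find_cat /= tmono ?inE // leqnn addn0 size_iota.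
have -> : has (fun n => t m <= t n) (iota 1 m.-1) = false.
  by apply/hasP => -[n]; rewrite mem_iota => nm; rewrite tmono ?inE; lia.
exact: prednK.
Qed.

Lemma sum_bcoef_path (N : nat) (e1 e2 v : nat -> nat -> R) (w : nat -> nat) :
  (1 <= N)%N -> e1 (w N) N = 0 -> e2 (w 1%N) 1%N = 0 ->
  \sum_(1 <= n < N.+1) bcoef N e1 e2 v (w n) n
    = \sum_(1 <= n < N) (e1 (w n) n + e2 (w n.+1) n.+1) + v (w N) N.
Proof.
move=> N1 e1N e21; rewrite big_nat_recr //= /bcoef ltnn e1N add0r.
rewrite (eq_big_nat _ _ (F2 := fun n => e1 (w n) n + e2 (w n) n)); last first.
  by move=> n /andP[_ ->].
rewrite !big_split -!addrA; congr (_ + _); rewrite addrA; congr (_ + _).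
by rewrite -big_nat_recr //= big_nat_recl // e21 add0r.
Qed.

Lemma sum_cash_gain_ge {c g1 g2 : nat -> R} (V : nat -> R) {m N : nat} :
  (1 <= m <= N)%N ->
  (forall n, (1 <= n < m)%N -> 0 <= c n + g1 n) ->
  (forall n, (m <= n < N)%N -> V n - V n.+1 <= c n + g2 n) ->
  V m <= \sum_(1 <= n < N) c n + V N
         + \sum_(1 <= n < m) g1 n + \sum_(m <= n < N) g2 n.
Proof.
move=> /andP[m1 mN] pre post.
have pre_ge0 : 0 <= \sum_(1 <= n < m) (c n + g1 n).
  by rewrite big_nat_cond; apply: sumr_ge0 => n /andP[/pre].
have post_ge : V m - V N <= \sum_(m <= n < N) (c n + g2 n).
  rewrite -opprB -(telescope_sumr V mN) -sumrN.
  by apply: ler_sum_nat => n /post; rewrite opprB.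
rewrite (big_cat_nat m1 mN) /= !big_split /= in pre_ge0 post_ge *; lra.
Qed.

End Superhedging.

Theorem mainTheorem6 (R : realType) (N J : nat) (t : nat -> R) (x : nat -> R)
  (p : nat -> nat -> R) (a : R -> R -> R)
  (e1 e2 v d1 d2 : nat -> nat -> R) :
  (1 <= N)%N -> (1 <= J)%N ->
  t 0%N = 0 -> (forall n, (n < N)%N -> t n < t n.+1) ->
  x 0%N = 0 -> 0 < x 1%N -> (forall j, (j < J)%N -> x j < x j.+1) ->
  (forall j n, (j <= J)%N -> (1 <= n <= N)%N -> 0 <= a (x j) (t n)) ->
  feasible N J x t a e1 e2 v d1 d2 ->
  forall (w : nat -> nat), (forall n, (1 <= n <= N)%N -> (w n <= J)%N) ->
  forall m : nat, (1 <= m <= N)%N ->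
  a (x (w m)) (t m) <= GT N J x t e1 e2 v d1 d2 w (t m).
Proof.
move=> N1 _ _ tinc _ _ xinc _ [e1N [e21 [_ [va [stock1 stock2]]]]] w wJ m mN.
have tmono := incn_prefix_mono tinc.
have xmono := incn_prefix_mono xinc.
have xinj : {in [pred i | (i <= J)%N] &, injective x}.
  by move=> i j iJ jJ xij; apply/eqP; rewrite eqn_leq -!xmono // xij lexx.
rewrite /GT Nrho_grid //.
under eq_big_nat => n nN do
  rewrite (eq_bigD1_indicator _ (bcoef N e1 e2 v ^~ n) xinj (wJ n nN)).
rewrite sum_bcoef_path ?e1N ?e21 ?wJ ?leqnn ?N1 //.
apply: le_trans (va _ _ (wJ _ mN) mN) _.
apply: (sum_cash_gain_ge _ (fun n => v (w n) n) mN) => n nm;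
  have [wn wn1 nN] : [/\ (w n <= J)%N, (w n.+1 <= J)%N & (1 <= n <= N.-1)%N]
    by split; [apply: wJ | apply: wJ | ]; lia.
- by rewrite mulrC; exact: stock1 _ _ _ wn wn1 nN.
- by have := stock2 _ _ _ wn wn1 nN; lra.
Qed.
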